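(* Let $S=(s_{jl})\in\mathbb{C}^{4\times4}$ be Hermitian and $\varepsilon\in\{1,-1\}$. The multiset of roots (counted with multiplicity) of the quadratic polynomial $d\mapsto d^2+2p(\theta_1,\theta_2)\,d+q(\theta_1,\theta_2)$ is independent of $(\theta_1,\theta_2)\in(-\pi,\pi]^2$ if and only if $s_{12}=s_{34}=0$ and at most one of the four numbers $s_{13},s_{14},s_{23},s_{24}$ is nonzero.
   Context: Let $S=(s_{jl})_{j,l=1}^4$ be a Hermitian $4\times4$ complex matrix (so $s_{jj}\in\mathbb{R}$ and $s_{lj}=\overline{s_{jl}}$) and $\varepsilon\in\{1,-1\}$. For $\theta_1,\theta_2\in\mathbb{R}$ define $$p=-\tfrac12\Big[s_{11}+s_{22}+s_{33}+s_{44}+2\varepsilon\operatorname{Re}(s_{12}\mathrm{e}^{i\theta_1})+2\varepsilon\operatorname{Re}(s_{34}\mathrm{e}^{i\theta_2})\Big],$$ $$\begin{aligned}q={}&-\big(|s_{13}|^2-s_{11}s_{33}+|s_{14}|^2-s_{11}s_{44}+|s_{23}|^2-s_{22}s_{33}+|s_{24}|^2-s_{22}s_{44}\big)\\&-2\varepsilon\Big[-(s_{33}+s_{44})\operatorname{Re}(s_{12}\mathrm{e}^{i\theta_1})+\operatorname{Re}\big((s_{13}\overline{s_{23}}+s_{14}\overline{s_{24}})\mathrm{e}^{i\theta_1}\big)\\&\qquad-(s_{11}+s_{22})\operatorname{Re}(s_{34}\mathrm{e}^{i\theta_2})+\operatorname{Re}\big((\overline{s_{13}}s_{14}+\overline{s_{23}}s_{24})\mathrm{e}^{i\theta_2}\big)\Big]\\&-2\operatorname{Re}\big((s_{14}\overline{s_{23}}-s_{12}s_{34})\mathrm{e}^{i(\theta_1+\theta_2)}\big)-2\operatorname{Re}\big((s_{13}\overline{s_{24}}-s_{12}\overline{s_{34}})\mathrm{e}^{i(\theta_1-\theta_2)}\big).\end{aligned}$$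 *)

From Stdlib Require Import Reals Lra.
Open Scope R_scope.

Definition Cx : Type := (R * R)%type.
Definition Cre (z : Cx) : R := fst z.
Definition Cim (z : Cx) : R := snd z.
Definition C0 : Cx := (0, 0).
Definition RtoC (x : R) : Cx := (x, 0).
Definition Cadd (z w : Cx) : Cx := (fst z + fst w, snd z + snd w).
Definition Csub (z w : Cx) : Cx := (fst z - fst w, snd z - snd w).
Definition Cmul (z w : Cx) : Cx :=
  (fst z * fst w - snd z * snd w, fst z * snd w + snd z * fst w).
Definition Cconj (z : Cx) : Cx := (fst z, - snd z).
Definition Cnorm2 (z : Cx) : R := fst z * fst z + snd z * snd z.
Definition Cexpi (t : R) : Cx := (cos t, sin t).

(* A 4x4 complex matrix, entries s j l for 1 <= j, l <= 4. *)
Definition hermitian4 (s : nat -> nat -> Cx) : Prop :=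
  forall j l, (1 <= j <= 4)%nat -> (1 <= l <= 4)%nat -> s l j = Cconj (s j l).

Definition pfun (s : nat -> nat -> Cx) (eps t1 t2 : R) : R :=
  - (1/2) * ( Cre (s 1%nat 1%nat) + Cre (s 2%nat 2%nat) + Cre (s 3%nat 3%nat)
              + Cre (s 4%nat 4%nat)
              + 2 * eps * Cre (Cmul (s 1%nat 2%nat) (Cexpi t1))
              + 2 * eps * Cre (Cmul (s 3%nat 4%nat) (Cexpi t2)) ).

Definition qfun (s : nat -> nat -> Cx) (eps t1 t2 : R) : R :=
  let s11 := Cre (s 1%nat 1%nat) in let s22 := Cre (s 2%nat 2%nat) in
  let s33 := Cre (s 3%nat 3%nat) in let s44 := Cre (s 4%nat 4%nat) in
  let s12 := s 1%nat 2%nat in let s13 := s 1%nat 3%nat in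
  let s14 := s 1%nat 4%nat in let s23 := s 2%nat 3%nat in
  let s24 := s 2%nat 4%nat in let s34 := s 3%nat 4%nat in
  - ( Cnorm2 s13 - s11 * s33 + Cnorm2 s14 - s11 * s44
      + Cnorm2 s23 - s22 * s33 + Cnorm2 s24 - s22 * s44 )
  - 2 * eps * ( - (s33 + s44) * Cre (Cmul s12 (Cexpi t1))
                + Cre (Cmul (Cadd (Cmul s13 (Cconj s23)) (Cmul s14 (Cconj s24)))
                            (Cexpi t1))
                - (s11 + s22) * Cre (Cmul s34 (Cexpi t2))
                + Cre (Cmul (Cadd (Cmul (Cconj s13) s14) (Cmul (Cconj s23) s24))
                            (Cexpi t2)) )
  - 2 * Cre (Cmul (Csub (Cmul s14 (Cconj s23)) (Cmul s12 s34)) (Cexpi (t1 + t2)))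
  - 2 * Cre (Cmul (Csub (Cmul s13 (Cconj s24)) (Cmul s12 (Cconj s34)))
                  (Cexpi (t1 - t2))).

Definition quadpoly (p q : R) (d : Cx) : Cx :=
  Cadd (Cadd (Cmul d d) (Cmul (RtoC (2 * p)) d)) (RtoC q).

(* r1, r2 are the roots, counted with multiplicity, of the monic quadratic:
   the polynomial factors as (d - r1)(d - r2). *)
Definition roots_are (p q : R) (r1 r2 : Cx) : Prop :=
  forall d : Cx, quadpoly p q d = Cmul (Csub d r1) (Csub d r2).

Definition same_multiset2 (a1 a2 b1 b2 : Cx) : Prop :=
  (a1 = b1 /\ a2 = b2) \/ (a1 = b2 /\ a2 = b1).

Definition in_angle (t : R) : Prop := - PI < t <= PI.

Definition roots_independent (s : nat -> nat -> Cx) (eps : R) : Prop :=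
  forall t1 t2 u1 u2 r1 r2 r1' r2',
    in_angle t1 -> in_angle t2 -> in_angle u1 -> in_angle u2 ->
    roots_are (pfun s eps t1 t2) (qfun s eps t1 t2) r1 r2 ->
    roots_are (pfun s eps u1 u2) (qfun s eps u1 u2) r1' r2' ->
    same_multiset2 r1 r2 r1' r2'.

Definition at_most_one_nonzero (a b c d : Cx) : Prop :=
  (a = C0 \/ b = C0) /\ (a = C0 \/ c = C0) /\ (a = C0 \/ d = C0) /\
  (b = C0 \/ c = C0) /\ (b = C0 \/ d = C0) /\ (c = C0 \/ d = C0).

(* By Vieta's formulas the multiset of roots determines p and q, so the roots
   are independent of (θ1, θ2) exactly when p and q are.  Both are real
   trigonometric polynomials in the frequencies θ1, θ2, θ1 + θ2, θ1 - θ2, which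
   are constant only if all their coefficients vanish.  For p this gives
   s12 = s34 = 0; then the coefficients of q are ε(s13 s̄23 + s14 s̄24),
   ε(s̄13 s14 + s̄23 s24), s14 s̄23 and s13 s̄24, and these all vanish exactly
   when at most one of s13, s14, s23, s24 is nonzero. *)

From Stdlib Require Import Reals Lra Psatz.
Open Scope R_scope.

Lemma Cx_ext (z w : Cx) : fst z = fst w -> snd z = snd w -> z = w.
Proof. destruct z, w; simpl; intros -> ->; reflexivity. Qed.

Lemma Cmul_C0_r (z : Cx) : Cmul z C0 = C0.
Proof. apply Cx_ext; unfold Cmul, C0; simpl; ring. Qed.

Lemma Cmul_eq0 (z w : Cx) : Cmul z w = C0 -> z = C0 \/ w = C0.
Proof.
  destruct z as [a b], w as [c d]; unfold Cmul, C0; simpl; intros [= H1 H2].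
  assert (Hn : (a * a + b * b) * (c * c + d * d) = 0) by nra.
  destruct (Rmult_integral _ _ Hn); [left | right]; apply Cx_ext; simpl; nra.
Qed.

Lemma Cconj_eq0 (z : Cx) : Cconj z = C0 -> z = C0.
Proof. destruct z; unfold Cconj, C0; intros [= -> H]; f_equal; lra. Qed.

Lemma Cmul_conjr_eq0 (z w : Cx) : Cmul z (Cconj w) = C0 -> z = C0 \/ w = C0.
Proof. intros [|H]%Cmul_eq0; [left | right; apply Cconj_eq0]; assumption. Qed.

Lemma Cmul_conjl_eq0 (z w : Cx) : Cmul (Cconj z) w = C0 -> z = C0 \/ w = C0.
Proof. intros [H|]%Cmul_eq0; [left; apply Cconj_eq0 | right]; assumption. Qed.

Lemma Cmul_RtoC_eq0 (x : R) (z : Cx) : x <> 0 -> Cmul (RtoC x) z = C0 -> z = C0.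
Proof.
  intros Hx [H|]%Cmul_eq0; [|assumption].
  unfold RtoC, C0 in H; injection H; contradiction.
Qed.

Lemma roots_are_exists (p q : R) : exists r1 r2, roots_are p q r1 r2.
Proof.
  destruct (Rle_dec 0 (p * p - q)) as [Hd|Hd].
  - pose proof (sqrt_sqrt _ Hd) as Hs.
    exists (- p + sqrt (p * p - q), 0), (- p - sqrt (p * p - q), 0); intros [x y].
    apply Cx_ext; unfold quadpoly, Cadd, Cmul, Csub, RtoC; simpl; lra.
  - assert (Hd' : 0 <= q - p * p) by lra; pose proof (sqrt_sqrt _ Hd') as Hs.
    exists (- p, sqrt (q - p * p)), (- p, - sqrt (q - p * p)); intros [x y].
    apply Cx_ext; unfold quadpoly, Cadd, Cmul, Csub, RtoC; simpl; lra.
Qed.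

Lemma roots_are_vieta (p q : R) (r1 r2 : Cx) :
  roots_are p q r1 r2 -> Cadd r1 r2 = RtoC (- (2 * p)) /\ Cmul r1 r2 = RtoC q.
Proof.
  intro H; pose proof (H (0, 0)) as H0; pose proof (H (1, 0)) as H1.
  destruct r1 as [a b], r2 as [c d].
  unfold quadpoly, Cadd, Cmul, Csub, RtoC in H0, H1; simpl in H0, H1.
  injection H0 as H0a H0b; injection H1 as H1a H1b.
  split; apply Cx_ext; unfold Cadd, Cmul, RtoC; simpl; lra.
Qed.

Lemma roots_are_unique (p q : R) (r1 r2 r1' r2' : Cx) :
  roots_are p q r1 r2 -> roots_are p q r1' r2' -> same_multiset2 r1 r2 r1' r2'.
Proof.
  intros H H'.
  assert (Hroot : Cmul (Csub r1 r1') (Csub r1 r2') = C0).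
  { rewrite <- H', H.
    destruct r1, r2; apply Cx_ext; unfold Cmul, Csub, C0; simpl; ring. }
  destruct (roots_are_vieta _ _ _ _ H) as [Hsum _].
  destruct (roots_are_vieta _ _ _ _ H') as [Hsum' _].
  rewrite <- Hsum' in Hsum; clear H H' Hsum'.
  destruct r1 as [a1 b1], r2 as [a2 b2], r1' as [c1 d1], r2' as [c2 d2].
  unfold Cadd in Hsum; simpl in Hsum; injection Hsum as Hsa Hsb.
  destruct (Cmul_eq0 _ _ Hroot) as [E|E]; unfold Csub, C0 in E; injection E as Ea Eb;
    [left | right]; split; apply Cx_ext; simpl; lra.
Qed.

Lemma roots_are_coeffs (p q p' q' : R) (r1 r2 r1' r2' : Cx) :
  roots_are p q r1 r2 -> roots_are p' q' r1' r2' ->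
  same_multiset2 r1 r2 r1' r2' -> p = p' /\ q = q'.
Proof.
  intros [Hs Hp]%roots_are_vieta [Hs' Hp']%roots_are_vieta Hm.
  assert (Es : Cadd r1 r2 = Cadd r1' r2' /\ Cmul r1 r2 = Cmul r1' r2').
  { destruct Hm as [[-> ->]|[-> ->]]; [split; reflexivity|].
    destruct r1', r2'; split; apply Cx_ext; unfold Cadd, Cmul; simpl; ring. }
  destruct Es as [Es Ep]; rewrite Hs, Hs' in Es; rewrite Hp, Hp' in Ep.
  unfold RtoC in Es, Ep; injection Es; injection Ep; lra.
Qed.

Lemma roots_independent_iff (s : nat -> nat -> Cx) (eps : R) :
  roots_independent s eps <->
  (forall t1 t2, in_angle t1 -> in_angle t2 ->
     pfun s eps t1 t2 = pfun s eps 0 0 /\ qfun s eps t1 t2 = qfun s eps 0 0).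
Proof.
  assert (H0 : in_angle 0) by (unfold in_angle; pose proof PI_RGT_0; lra).
  split.
  - intros Hind t1 t2 h1 h2.
    destruct (roots_are_exists (pfun s eps t1 t2) (qfun s eps t1 t2)) as (r1 & r2 & Hr).
    destruct (roots_are_exists (pfun s eps 0 0) (qfun s eps 0 0)) as (r1' & r2' & Hr').
    exact (roots_are_coeffs _ _ _ _ _ _ _ _ Hr Hr' (Hind _ _ _ _ _ _ _ _ h1 h2 H0 H0 Hr Hr')).
  - intros Hc t1 t2 u1 u2 r1 r2 r1' r2' h1 h2 k1 k2 Hr Hr'.
    destruct (Hc _ _ h1 h2) as [Ep Eq]; rewrite Ep, Eq in Hr.
    destruct (Hc _ _ k1 k2) as [Ep' Eq']; rewrite Ep', Eq' in Hr'.
    exact (roots_are_unique _ _ _ _ _ _ Hr Hr').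
Qed.

Definition trig2 (a b c d : Cx) (t1 t2 : R) : R :=
  Cre (Cmul a (Cexpi t1)) + Cre (Cmul b (Cexpi t2))
  + Cre (Cmul c (Cexpi (t1 + t2))) + Cre (Cmul d (Cexpi (t1 - t2))).

Lemma trig2_0 (t1 t2 : R) : trig2 C0 C0 C0 C0 t1 t2 = 0.
Proof. unfold trig2, Cre, Cmul, C0; simpl; ring. Qed.

Lemma trig2_const_coeffs_eq0 (a b c d : Cx) :
  (forall t1 t2, in_angle t1 -> in_angle t2 -> trig2 a b c d t1 t2 = trig2 a b c d 0 0) ->
  a = C0 /\ b = C0 /\ c = C0 /\ d = C0.
Proof.
  intro H.
  (* Sampling at θ1, θ2 in {0, ±π/2, π} already gives enough linear equations. *)
  assert (A0 : in_angle 0) by (unfold in_angle; pose proof PI_RGT_0; lra).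
  assert (A1 : in_angle (PI / 2)) by (unfold in_angle; pose proof PI_RGT_0; lra).
  assert (A2 : in_angle PI) by (unfold in_angle; pose proof PI_RGT_0; lra).
  assert (A3 : in_angle (- (PI / 2))) by (unfold in_angle; pose proof PI_RGT_0; lra).
  pose proof (H _ _ A0 A1); pose proof (H _ _ A0 A2); pose proof (H _ _ A0 A3);
  pose proof (H _ _ A1 A0); pose proof (H _ _ A1 A1); pose proof (H _ _ A1 A2);
  pose proof (H _ _ A1 A3); pose proof (H _ _ A2 A0); pose proof (H _ _ A2 A1);
  pose proof (H _ _ A2 A2); pose proof (H _ _ A2 A3); pose proof (H _ _ A3 A0);
  pose proof (H _ _ A3 A1); pose proof (H _ _ A3 A2); pose proof (H _ _ A3 A3).
  clear H A0 A1 A2 A3.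
  destruct a, b, c, d; unfold trig2, Cre, Cmul, Cexpi, C0 in *; simpl in *.
  rewrite ?cos_plus, ?sin_plus, ?cos_minus, ?sin_minus, ?cos_neg, ?sin_neg, ?cos_0,
    ?sin_0, ?cos_PI2, ?sin_PI2, ?cos_PI, ?sin_PI, ?Rplus_0_r, ?Rminus_0_r in *.
  repeat split; f_equal; lra.
Qed.

Lemma pfun_trig2 (s : nat -> nat -> Cx) (eps t1 t2 u1 u2 : R) :
  let a := Cmul (RtoC eps) (s 1%nat 2%nat) in
  let b := Cmul (RtoC eps) (s 3%nat 4%nat) in
  pfun s eps t1 t2 + trig2 a b C0 C0 t1 t2 = pfun s eps u1 u2 + trig2 a b C0 C0 u1 u2.
Proof.
  intros a b; subst a b.
  unfold pfun, trig2, Cre, Cmul, Cexpi, RtoC, C0; simpl; field.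
Qed.

Lemma qfun_trig2 (s : nat -> nat -> Cx) (eps t1 t2 u1 u2 : R) :
  s 1%nat 2%nat = C0 -> s 3%nat 4%nat = C0 ->
  let a := s 1%nat 3%nat in let b := s 1%nat 4%nat in
  let c := s 2%nat 3%nat in let d := s 2%nat 4%nat in
  let A := Cmul (RtoC eps) (Cadd (Cmul a (Cconj c)) (Cmul b (Cconj d))) in
  let B := Cmul (RtoC eps) (Cadd (Cmul (Cconj a) b) (Cmul (Cconj c) d)) in
  let C := Cmul b (Cconj c) in let D := Cmul a (Cconj d) in
  qfun s eps t1 t2 + 2 * trig2 A B C D t1 t2 = qfun s eps u1 u2 + 2 * trig2 A B C D u1 u2.
Proof.
  intros H12 H34 a b c d A B C D; subst a b c d A B C D; unfold qfun; rewrite H12, H34.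
  unfold trig2, Cre, Cmul, Cadd, Csub, Cconj, Cexpi, RtoC, C0; simpl; ring.
Qed.

Lemma cross_terms_eq0_iff (a b c d : Cx) :
  (Cadd (Cmul a (Cconj c)) (Cmul b (Cconj d)) = C0 /\
   Cadd (Cmul (Cconj a) b) (Cmul (Cconj c) d) = C0 /\
   Cmul b (Cconj c) = C0 /\ Cmul a (Cconj d) = C0)
  <-> at_most_one_nonzero a b c d.
Proof.
  unfold at_most_one_nonzero; split.
  - intros (HA & HB & HC & HD).
    destruct (Cmul_conjr_eq0 _ _ HC) as [-> | ->], (Cmul_conjr_eq0 _ _ HD) as [-> | ->].
    + enough (c = C0 \/ d = C0) by tauto.
      apply Cmul_conjl_eq0; rewrite <- HB; destruct c, d; apply Cx_ext;
        unfold Cadd, Cmul, Cconj, C0; simpl; ring.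
    + enough (a = C0 \/ c = C0) by tauto.
      apply Cmul_conjr_eq0; rewrite <- HA; destruct a, c; apply Cx_ext;
        unfold Cadd, Cmul, Cconj, C0; simpl; ring.
    + enough (b = C0 \/ d = C0) by tauto.
      apply Cmul_conjr_eq0; rewrite <- HA; destruct b, d; apply Cx_ext;
        unfold Cadd, Cmul, Cconj, C0; simpl; ring.
    + enough (a = C0 \/ b = C0) by tauto.
      apply Cmul_conjl_eq0; rewrite <- HB; destruct a, b; apply Cx_ext;
        unfold Cadd, Cmul, Cconj, C0; simpl; ring.
  - intros (H1 & H2 & H3 & H4 & H5 & H6).
    destruct H1, H2, H3, H4, H5, H6; subst; repeat split;
      apply Cx_ext; unfold Cadd, Cmul, Cconj, C0; simpl; ring.
Qed.

Lemma coeffs_const_iff (s : nat -> nat -> Cx) (eps : R) : eps <> 0 ->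
  (forall t1 t2, in_angle t1 -> in_angle t2 ->
     pfun s eps t1 t2 = pfun s eps 0 0 /\ qfun s eps t1 t2 = qfun s eps 0 0) <->
  (s 1%nat 2%nat = C0 /\ s 3%nat 4%nat = C0 /\
   Cadd (Cmul (s 1%nat 3%nat) (Cconj (s 2%nat 3%nat)))
        (Cmul (s 1%nat 4%nat) (Cconj (s 2%nat 4%nat))) = C0 /\
   Cadd (Cmul (Cconj (s 1%nat 3%nat)) (s 1%nat 4%nat))
        (Cmul (Cconj (s 2%nat 3%nat)) (s 2%nat 4%nat)) = C0 /\
   Cmul (s 1%nat 4%nat) (Cconj (s 2%nat 3%nat)) = C0 /\
   Cmul (s 1%nat 3%nat) (Cconj (s 2%nat 4%nat)) = C0).
Proof.
  intro Heps; split.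
  - intro Hc.
    edestruct trig2_const_coeffs_eq0 as (H12 & H34 & _).
    { intros t1 t2 h1 h2; pose proof (pfun_trig2 s eps t1 t2 0 0) as Hp; cbv zeta in Hp.
      rewrite (proj1 (Hc _ _ h1 h2)) in Hp; apply Rplus_eq_reg_l in Hp; exact Hp. }
    apply Cmul_RtoC_eq0 in H12, H34; try exact Heps.
    edestruct trig2_const_coeffs_eq0 as (HA & HB & HC & HD).
    { intros t1 t2 h1 h2; pose proof (qfun_trig2 s eps t1 t2 0 0 H12 H34) as Hq; cbv zeta in Hq.
      rewrite (proj2 (Hc _ _ h1 h2)) in Hq; apply Rplus_eq_reg_l, Rmult_eq_reg_l in Hq;
        [exact Hq | discrR]. }
    apply Cmul_RtoC_eq0 in HA, HB; try exact Heps.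
    repeat split; assumption.
  - intros (H12 & H34 & HA & HB & HC & HD) t1 t2 _ _; split.
    + pose proof (pfun_trig2 s eps t1 t2 0 0) as Hp; cbv zeta in Hp.
      rewrite H12, H34, Cmul_C0_r, !trig2_0 in Hp; lra.
    + pose proof (qfun_trig2 s eps t1 t2 0 0 H12 H34) as Hq; cbv zeta in Hq.
      rewrite HA, HB, HC, HD, Cmul_C0_r, !trig2_0 in Hq; lra.
Qed.

Theorem mainTheorem13 (s : nat -> nat -> Cx) (eps : R) :
  hermitian4 s -> (eps = 1 \/ eps = -1) ->
  (roots_independent s eps <->
   (s 1%nat 2%nat = C0 /\ s 3%nat 4%nat = C0 /\
    at_most_one_nonzero (s 1%nat 3%nat) (s 1%nat 4%nat)
                        (s 2%nat 3%nat) (s 2%nat 4%nat))).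
Proof.
  intros _ Heps.
  assert (Heps0 : eps <> 0) by (destruct Heps; lra).
  rewrite roots_independent_iff, (coeffs_const_iff s eps Heps0), <- cross_terms_eq0_iff.
  tauto.
Qed.
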